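(* Let $p$ be an odd prime and $i$ an integer with $1\leq i<p-1$. For an integer $1\leq l\leq i+1$ set \[G_i(l)=\sum_{k=1}^l(-1)^{k-1}(k-1)!{l \brace k}_{\leq i}+\frac{p\cdot l!}{(l+p-1)!}{l+p-1 \brace p}_{\leq i}.\] Then $G_i(l)\in\mathbb{Z}_{(p)}$ with $G_i(l)\equiv -1\pmod p$ if $l=i+1$, and $G_i(l)\equiv 0\pmod p$ if $l\leq i$ (i.e. $G_i(l)=-1+O(p)$, resp. $O(p)$).
   Context: For integers $N\geq k\geq 0$ and $r\geq1$, the $r$-restricted Stirling number of the second kind is ${N \brace k}_{\leq r}=\sum \frac{N!}{\prod_{m=1}^{r} j_m!\,(m!)^{j_m}}$, the sum over $(j_1,\dots,j_r)\in\mathbb{N}^r$ with $\sum_m j_m=k$ and $\sum_m m j_m=N$; equivalently the number of partitions of an $N$-element set into $k$ nonempty blocks each of size at most $r$. $O(p)$ means an element of $p\mathbb{Z}_{(p)}$. *)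

From mathcomp Require Import all_boot all_order all_algebra.
Set Implicit Arguments. Unset Strict Implicit. Unset Printing Implicit Defensive.
Import Order.TTheory GRing.Theory Num.Theory.

Definition rstirling (N k r : nat) : nat :=
  #|[set P : {set {set 'I_N}} |
      [&& partition P [set: 'I_N], #|P| == k & [forall B in P, #|B| <= r]]]|.

Local Open Scope ring_scope.

Definition in_Zloc (p : nat) (x : rat) : Prop :=
  exists (a b : int), ~~ (p%:Z %| b)%Z /\ x = a%:~R / b%:~R.

Definition O_p (p : nat) (x : rat) : Prop :=
  exists (a b : int), ~~ (p%:Z %| b)%Z /\ x = p%:R * a%:~R / b%:~R.

Definition G (p i l : nat) : rat :=
  \sum_(1 <= k < l.+1) (-1) ^+ k.-1 * (k.-1)`!%:R * (rstirling l k i)%:R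
  + p%:R * l`!%:R / (l + p - 1)`!%:R * (rstirling (l + p - 1) p i)%:R.

(* In the first summand of G_i(l), for [l <= i] the size restriction is
   vacuous and the alternating sum of Stirling numbers telescopes through
   S(n+1,k+1) = (k+1) S(n,k+1) + S(n,k) to [l = 1]; for [l = i+1] only the
   one-block partition is excluded, so the sum drops to -1.  In the second
   summand, (l+p-1)! has p-adic valuation 1.  For [l >= 2] the p-cycle
   (0 1 ... p-1) acts on the partitions of the (l+p-1)-element set into p
   blocks of size <= i without fixed points: in a fixed partition the number
   of fixed blocks is positive (the block of the fixed point p) and divisible
   by p, so every block is fixed, and the block of 0 would contain the whole
   cycle.  Hence p divides the restricted Stirling number.  For [l = 1] the
   summand is 1/(p-1)!, and Wilson's theorem gives 1 + 1/(p-1)! = O(p). *)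

From mathcomp Require Import all_boot all_order all_algebra all_fingroup all_solvable.
From mathcomp Require Import zify ring.
Set Implicit Arguments. Unset Strict Implicit. Unset Printing Implicit Defensive.
Import GRing.Theory Num.Theory.

Section KPartitions.
Variable T : finType.
Implicit Types (x : T) (A B : {set T}) (P Q : {set {set T}}).

Definition kpartitions A k := [set P | partition P A && (#|P| == k)].

Lemma kpartitionsP A k P : reflect (partition P A /\ #|P| = k) (P \in kpartitions A k).
Proof. by rewrite inE; apply: (iffP andP) => -[-> /eqP]. Qed.

Lemma leqif_card_partition P A :
  partition P A -> #|P| <= #|A| ?= iff [forall (B | B \in P), 1 == #|B|].
Proof.
move=> pP; rewrite (card_partition pP) -sum1_card.
by apply: leqif_sum => B BP; apply/leqif_eq; rewrite card_gt0 (partition_neq0 pP BP).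
Qed.

Lemma kpartitions_eq0 A k : #|A| < k -> kpartitions A k = set0.
Proof.
move=> ltAk; apply/setP => P; rewrite !inE; apply/negbTE/andP => -[pP /eqP cP].
by have [] := leqif_card_partition pP; rewrite cP leqNgt ltAk.
Qed.

Lemma kpartitions0 A : A != set0 -> kpartitions A 0 = set0.
Proof.
move=> nA; apply/setP => P; rewrite !inE; apply/negbTE/andP => -[pP /eqP/cards0_eq P0].
by move: pP nA => /and3P[/eqP <- _ _]; rewrite P0 /cover big_set0 eqxx.
Qed.

Lemma partition_card1 P A : partition P A -> #|P| = 1 -> P = [set A].
Proof.
by move=> pP /eqP/cards1P[B PB]; move: pP; rewrite PB => /and3P[/eqP <- _ _]; rewrite cover1.
Qed.

Lemma kpartitions1 A : A != set0 -> kpartitions A 1 = [set [set A]].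
Proof.
move=> nA; apply/setP => P; rewrite !inE; apply/andP/eqP => [[pP /eqP]|->].
  exact: partition_card1.
by rewrite cards1 /partition cover1 trivIset1 inE eq_sym nA !eqxx.
Qed.

Lemma card_block_le P A B : partition P A -> B \in P -> #|B| + #|P|.-1 <= #|A|.
Proof.
move=> pP BP; have [+ _] := leqif_card_partition (partitionD1 pP BP).
rewrite [#|A :\: B|]cardsD (setIidPr (partitionS pP BP)) (cardsD1 B P) BP add1n -leq_subRL //.
exact: subset_leq_card (partitionS pP BP).
Qed.

Lemma partition_set1 A : partition [set [set y] | y in A] A.
Proof.
have disj : {in A &, forall y z, z != y -> [disjoint [set y] & [set z]]}.
  by move=> y z _ _ zNy; rewrite disjoints1 inE eq_sym.
have nonempty y : y \in A -> [set y] != set0 by move=> _; apply/set0Pn; exists y; rewrite set11.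
have [+ _] := indexed_partition disj nonempty.
suff -> : cover [set [set y] | y in A] = A by [].
rewrite cover_imset; apply/setP => y; apply/bigcupP/idP => [[z zA /set1P ->] //|yA].
by exists y; rewrite ?set11.
Qed.

Section AddPoint.
Variables (x : T) (A : {set T}).
Hypothesis xNA : x \notin A.

Definition insert_in_block (QB : {set {set T}} * {set T}) := (x |: QB.2) |: (QB.1 :\ QB.2).

Definition remove_from_block P :=
  ((pblock P x :\ x) |: (P :\ pblock P x), pblock P x :\ x).

Definition marked_kpartitions k :=
  [set QB : {set {set T}} * {set T} | (QB.1 \in kpartitions A k) && (QB.2 \in QB.1)].

Lemma card_marked_kpartitions k : #|marked_kpartitions k| = k * #|kpartitions A k|.
Proof.
rewrite -sum1_card; under eq_bigl do rewrite inE.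
rewrite -(pair_big_dep (mem (kpartitions A k)) (fun Q B => B \in Q) (fun _ _ => 1)) /=.
rewrite mulnC -sum_nat_const; apply: eq_bigr => Q /kpartitionsP[_ <-].
by rewrite sum1_card.
Qed.

Lemma notin_block Q B : partition Q A -> B \in Q -> x \notin B.
Proof. by move=> pQ BQ; apply: contra xNA; apply/subsetP/(partitionS pQ). Qed.

Lemma set1_notin_partition Q : partition Q A -> [set x] \notin Q.
Proof. by move=> pQ; apply/negP => /(notin_block pQ); rewrite set11. Qed.

Lemma insert_in_block_partition Q B : partition Q A -> B \in Q ->
  partition (insert_in_block (Q, B)) (x |: A).
Proof.
move=> pQ BQ; have BA := partitionS pQ BQ; have xNB := notin_block pQ BQ.
have -> : x |: A = (x |: B) :|: (A :\: B) by rewrite -setUA -{1}(setIidPr BA) setID.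
apply: partitionU1 (partitionD1 pQ BQ) _ _; first by apply/set0Pn; exists x; rewrite setU11.
rewrite -setI_eq0; apply/eqP/setP => y; rewrite !inE.
by case: eqP => [->|_]; [rewrite (negbTE xNA) andbF | case: (y \in B)].
Qed.

Lemma insert_in_block_notin Q B : partition Q A -> B \in Q -> x |: B \notin Q :\ B.
Proof. by move=> pQ BQ; apply/negP => /setD1P[_ /(notin_block pQ)]; rewrite setU11. Qed.

Lemma card_insert_in_block Q B : partition Q A -> B \in Q ->
  #|insert_in_block (Q, B)| = #|Q|.
Proof. by move=> pQ BQ; rewrite cardsU1 insert_in_block_notin // (cardsD1 B Q) BQ. Qed.

Lemma set1_notin_insert_in_block Q B : partition Q A -> B \in Q ->
  [set x] \notin insert_in_block (Q, B).
Proof.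
move=> pQ BQ; rewrite !inE negb_or (negbTE (set1_notin_partition pQ)) andbF andbT.
apply/eqP => eB; have /set0Pn[y yB] := partition_neq0 pQ BQ.
have : y \in [set x] by rewrite eB !inE yB orbT.
by rewrite inE => /eqP yx; move: (notin_block pQ BQ); rewrite -yx yB.
Qed.

Lemma remove_from_block_facts P : partition P (x |: A) -> [set x] \notin P ->
  let Bx := pblock P x in let B := Bx :\ x in
  [/\ Bx \in P, x \in Bx, B \notin P :\ Bx & partition (B |: (P :\ Bx)) A].
Proof.
move=> pP xNP Bx B.
have xP : x \in cover P by rewrite (cover_partition pP) setU11.
have BxP : Bx \in P := pblock_mem xP.
have xBx : x \in Bx by rewrite mem_pblock.
have BN0 : B != set0.
  by apply: contraNneq xNP => B0; rewrite -(setD1K xBx) -/B B0 setU0 in BxP.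
have BNP : B \notin P :\ Bx.
  apply/negP => /setD1P[BBx BP]; have /set0Pn[y yB] := BN0.
  have /trivIsetP/(_ B Bx BP BxP BBx) := partition_trivIset pP.
  by move/disjointFr/(_ yB); rewrite (subsetP (subD1set Bx x) y yB).
split=> //; have BxA := partitionS pP BxP.
have <- : B :|: ((x |: A) :\: Bx) = A.
  apply/setP => y; rewrite !inE; have := subsetP BxA y; rewrite !inE.
  by case: eqVneq => [->|_] /=; [rewrite xBx (negbTE xNA) | case: (y \in Bx) => // ->].
apply: partitionU1 (partitionD1 pP BxP) BN0 _.
by rewrite -setI_eq0; apply/eqP/setP => y; rewrite !inE; case: (y \in Bx); rewrite ?andbF.
Qed.

Lemma insert_in_blockK Q B : partition Q A -> B \in Q ->
  remove_from_block (insert_in_block (Q, B)) = (Q, B).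
Proof.
move=> pQ BQ; have pI := insert_in_block_partition pQ BQ.
have pxE : pblock (insert_in_block (Q, B)) x = x |: B.
  by apply: def_pblock; rewrite ?setU11 ?(partition_trivIset pI).
rewrite /remove_from_block -/(insert_in_block _) pxE /=.
by rewrite !setU1K ?insert_in_block_notin ?(notin_block pQ) ?setD1K.
Qed.

Lemma remove_from_blockK P : partition P (x |: A) -> [set x] \notin P ->
  insert_in_block (remove_from_block P) = P.
Proof.
move=> pP xNP; have [BxP xBx BNP _] := remove_from_block_facts pP xNP.
by rewrite /insert_in_block /= setD1K // setU1K // setD1K.
Qed.

Lemma card_kpartitions_set1 k :
  #|kpartitions (x |: A) k.+1 :&: [set P : {set {set T}} | [set x] \in P]|
  = #|kpartitions A k|.
Proof.
have ->: kpartitions (x |: A) k.+1 :&: [set P : {set {set T}} | [set x] \in P]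
    = [set [set x] |: Q | Q in kpartitions A k].
  apply/setP => P; rewrite !inE; apply/idP/imsetP => [/andP[/andP[pP /eqP cP] xP]|].
    exists (P :\ [set x]); last by rewrite setD1K.
    have := partitionD1 pP xP; rewrite setU1K // => pPx.
    by apply/kpartitionsP; split=> //; move: cP; rewrite (cardsD1 [set x] P) xP add1n => -[].
  case=> Q /kpartitionsP[pQ cQ] ->.
  rewrite setU11 cardsU1 set1_notin_partition // cQ eqxx !andbT.
  by apply: partitionU1 => //; [apply/set0Pn; exists x; rewrite inE | rewrite disjoints1].
apply: card_in_imset => Q1 Q2 /kpartitionsP[pQ1 _] /kpartitionsP[pQ2 _] e.
by rewrite -(setU1K (set1_notin_partition pQ1)) e setU1K // set1_notin_partition.
Qed.

Lemma card_kpartitions_notset1 k :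
  #|kpartitions (x |: A) k :\: [set P : {set {set T}} | [set x] \in P]|
  = k * #|kpartitions A k|.
Proof.
rewrite -card_marked_kpartitions.
have -> : kpartitions (x |: A) k :\: [set P : {set {set T}} | [set x] \in P]
    = insert_in_block @: marked_kpartitions k.
  apply/setP => P; rewrite !inE; apply/idP/imsetP => [/andP[xNP /andP[pP /eqP cP]]|].
    have [BxP xBx BNP pB] := remove_from_block_facts pP xNP.
    exists (remove_from_block P); last by rewrite remove_from_blockK.
    by rewrite !inE /= eqxx pB cardsU1 BNP -cP (cardsD1 (pblock P x) P) BxP eqxx.
  case=> [[Q B]]; rewrite !inE /= => /andP[/andP[pQ /eqP cQ] BQ] ->.
  rewrite set1_notin_insert_in_block // insert_in_block_partition //.
  by rewrite card_insert_in_block // cQ eqxx.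
apply/card_in_imset/(can_in_inj (g := remove_from_block)) => -[Q B].
by rewrite !inE /= => /andP[/andP[pQ _] BQ]; rewrite insert_in_blockK.
Qed.

Lemma card_kpartitionsU1 k :
  #|kpartitions (x |: A) k.+1| = k.+1 * #|kpartitions A k.+1| + #|kpartitions A k|.
Proof.
rewrite -(cardsID [set P : {set {set T}} | [set x] \in P]).
by rewrite card_kpartitions_set1 card_kpartitions_notset1 addnC.
Qed.

End AddPoint.

Local Open Scope ring_scope.

Lemma sum_alt_card_kpartitions (R : comPzRingType) A : A != set0 ->
  \sum_(1 <= k < #|A|.+1) (-1) ^+ k.-1 * (k.-1)`!%:R * #|kpartitions A k|%:R
  = (#|A| == 1%N)%:R :> R.
Proof.
move=> AN0; have [A1|AN1] := eqVneq #|A| 1%N.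
  by rewrite A1 big_nat1 kpartitions1 // cards1 !mulr1.
have /set0Pn[x xA] := AN0; set A' := A :\ x.
have xNA' : x \notin A' by rewrite !inE eqxx.
have cA : #|A| = #|A'|.+1 by rewrite (cardsD1 x A) xA.
have A'N0 : A' != set0 by rewrite -card_gt0 lt0n; apply: contraNneq AN1; rewrite cA => ->.
rewrite -(setD1K xA) -/A' cardsU1 xNA' add1n big_add1 /=.
pose f j : R := - ((-1) ^+ j * j`!%:R * #|kpartitions A' j|%:R).
rewrite (@telescope_sumr_eq _ _ _ f) // => [|k _].
  by rewrite /f kpartitions_eq0 ?kpartitions0 // !cards0 !mulr0 oppr0 subr0.
by rewrite /f card_kpartitionsU1 // natrD natrM factS natrM exprS; ring.
Qed.

End KPartitions.


Lemma rstirling_unrestricted N k r : N <= r -> rstirling N k r = #|kpartitions [set: 'I_N] k|.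
Proof.
move=> Nr; apply: eq_card => P; rewrite !inE andbA andb_idr // => _.
by apply/forall_inP => B _; apply: leq_trans Nr; rewrite -[leqRHS](card_ord N) max_card.
Qed.

Lemma rstirling_succ r k : rstirling r.+1 k r + (k == 1) = #|kpartitions [set: 'I_r.+1] k|.
Proof.
have TN0 : [set: 'I_r.+1] != set0 by apply/set0Pn; exists ord0.
have [->|kN1] := eqVneq k 1.
  suff -> : rstirling r.+1 1 r = 0 by rewrite kpartitions1 // cards1.
  apply/eqP; rewrite cards_eq0.
  apply/eqP/setP => P; rewrite !inE; apply/negbTE/and3P => -[pP /eqP/(partition_card1 pP) ->].
  by move=> /forall_inP/(_ _ (set11 _)); rewrite cardsT card_ord ltnn.
rewrite addn0; apply: eq_card => P; rewrite !inE andbA andb_idr // => /andP[pP /eqP cP].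
apply/forall_inP => B BP; have := card_block_le pP BP; rewrite cardsT card_ord cP.
by case: k kN1 cP => [_ /cards0_eq P0|[|k] //]; [rewrite P0 inE in BP | lia].
Qed.

Lemma rstirling_diag n r : 0 < r -> rstirling n n r = 1.
Proof.
move=> r0; set Q := [set [set y] | y in [set: 'I_n]].
have cQ : #|Q| = n by rewrite card_imset ?cardsT ?card_ord //; apply: set1_inj.
apply/eqP/cards1P; exists Q; apply/setP => P; rewrite !inE.
apply/idP/eqP => [/and3P[pP /eqP cP _]|->]; last first.
  by rewrite partition_set1 cQ eqxx; apply/forall_inP => _ /imsetP[y _ ->]; rewrite cards1.
have [_] := leqif_card_partition pP; rewrite cP cardsT card_ord eqxx => /esym/forall_inP P1.
apply/esym/eqP; rewrite eqEcard cP cQ leqnn andbT; apply/subsetP => _ /imsetP[y _ ->].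
have yP : y \in cover P by rewrite (cover_partition pP) inE.
have /eqP/esym/eqP/cards1P[z Bz] := P1 _ (pblock_mem yP).
have : y \in pblock P y by rewrite mem_pblock.
by rewrite Bz => /set1P yz; rewrite yz -Bz pblock_mem.
Qed.

Section Rotation.
Variables (p N : nat).
Hypotheses (p_gt0 : 0 < p) (p_le_N : p <= N).

Definition rot (x : 'I_N) : 'I_N := insubd x (if x < p then x.+1 %% p else x).

Lemma rotE x : rot x = (if x < p then x.+1 %% p else x) :> nat.
Proof.
rewrite val_insubd; case: (ltnP x p) => _; last by rewrite ltn_ord.
by rewrite (leq_trans (ltn_pmod _ p_gt0) p_le_N).
Qed.

Lemma iter_rot_lt (x : 'I_N) m : x < p -> iter m rot x = (x + m) %% p :> nat.
Proof.
move=> xp; elim: m => [|m IHm]; first by rewrite addn0 modn_small.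
by rewrite iterS rotE IHm ltn_pmod // -addn1 modnDml addn1 addnS.
Qed.

Lemma iter_rot_ge (x : 'I_N) m : p <= x -> iter m rot x = x.
Proof.
by move=> px; elim: m => //= m ->; apply: ord_inj; rewrite rotE ltnNge px.
Qed.

Lemma iter_rot_p x : iter p rot x = x.
Proof.
have [xp|] := ltnP x p; last exact: iter_rot_ge.
by apply: ord_inj; rewrite iter_rot_lt // modnDr modn_small.
Qed.

Lemma rot_inj : injective rot.
Proof.
by apply: (can_inj (g := iter p.-1 rot)) => x; rewrite -iterSr prednK ?iter_rot_p.
Qed.

Definition rot_perm := perm rot_inj.

Lemma rot_permX m x : (rot_perm ^+ m)%g x = iter m rot x.
Proof. by rewrite permX; apply: eq_iter; apply: permE. Qed.

Lemma rot_perm_expp : (rot_perm ^+ p = 1)%g.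
Proof. by apply/permP => x; rewrite rot_permX iter_rot_p perm1. Qed.

End Rotation.

Definition rpartitions N k r : {set {set {set 'I_N}}} :=
  [set P | [&& partition P [set: 'I_N], #|P| == k & [forall B in P, #|B| <= r]]].

Local Notation part_act N := (('P^*)^* : action [set: {perm 'I_N}] {set {set 'I_N}})%act.

Lemma part_actE N (P : {set {set 'I_N}}) (s : {perm 'I_N}) :
  part_act N P s = [set [set s y | y in B] | B : {set 'I_N} in P].
Proof. by rewrite /= !setactE; apply: eq_imset => B; rewrite /= setactE. Qed.

Lemma block_actE N (B : {set 'I_N}) (s : {perm 'I_N}) : ('P^*)%act B s = [set s y | y in B].
Proof. by rewrite /= setactE. Qed.

Lemma rpartitions_act N k r (s : {perm 'I_N}) P :
  P \in rpartitions N k r -> part_act N P s \in rpartitions N k r.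
Proof.
rewrite !inE part_actE => /and3P[pP cP bP].
have sT : [set s y | y in [set: 'I_N]] = [set: 'I_N].
  by apply/eqP; rewrite eqEcard subsetT /= card_imset //; apply: perm_inj.
rewrite -[in partition _ _]sT imset_partition ?pP /=; last exact: perm_inj.
rewrite card_imset ?cP /=; last exact/imset_inj/perm_inj.
by apply/forall_inP => _ /imsetP[B BP ->]; rewrite card_imset ?(forall_inP bP) //; apply: perm_inj.
Qed.

Section RotationFixedPartitions.
Variables (p N : nat).
Hypotheses (p_prime : prime p) (p_lt_N : p < N).
Let p_gt0 := prime_gt0 p_prime.
Let p_le_N := ltnW p_lt_N.
Local Notation s := (rot_perm p_gt0 p_le_N).

Lemma rot_pgroup : (p.-group <[s]>)%g.
Proof. by apply: pnat_dvd (pnat_id p_prime); rewrite order_dvdn rot_perm_expp. Qed.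

Lemma rot_fixed_partition_blocks P : partition P [set: 'I_N] -> #|P| = p ->
  part_act N P s = P -> {in P, forall B, ('P^*)%act B s = B}.
Proof.
move=> pP cP sP.
have sB B : B \in P -> ('P^*)%act B s \in P.
  by move=> BP; rewrite -[in X in _ \in X]sP part_actE block_actE imset_f.
have acts_blocks : [acts <[s]>%g, on P | 'P^*].
  by rewrite cycle_subG !inE; apply/subsetP => B BP; rewrite inE sB.
have := pgroup_fix_mod rot_pgroup acts_blocks; rewrite afix_cycle cP modnn.
set F := P :&: _ => /eqP; rewrite eq_sym -/(dvdn p #|F|) => pF.
have covP y : y \in cover P by rewrite (cover_partition pP) inE.
have [y0 y0p] : {y0 : 'I_N | y0 = p :> nat} by exists (Ordinal p_lt_N).
have sy0 : s y0 = y0 by apply: ord_inj; rewrite permE (rotE p_gt0 p_le_N) y0p ltnn.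
have y0F : pblock P y0 \in F.
  rewrite inE pblock_mem //; apply/afix1P/esym/def_pblock; rewrite ?sB ?pblock_mem //.
    exact: partition_trivIset pP.
  by rewrite block_actE -{1}sy0 imset_f // mem_pblock.
have FP : F = P.
  apply/eqP; rewrite eqEcard subsetIl cP dvdn_leq // card_gt0.
  by apply/set0Pn; exists (pblock P y0).
by move=> B; rewrite -FP => /setIP[_ /afix1P].
Qed.

Lemma rot_stable_block_large B : ('P^*)%act B s = B -> (exists2 c : 'I_N, c \in B & c < p) ->
  p <= #|B|.
Proof.
move=> sB [c cB cp].
have orbit_in m : (s ^+ m)%g c \in B.
  by elim: m => [|m IHm]; rewrite ?expg0 ?perm1 // expgSr permM -sB block_actE imset_f.
have orbit_inj : injective (fun m : 'I_p => (s ^+ m)%g c).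
  move=> m1 m2 /(congr1 (@nat_of_ord N)); rewrite !rot_permX !iter_rot_lt // => /eqP.
  by rewrite eqn_modDl !modn_small // => /eqP/ord_inj.
rewrite -[p](card_ord p) -(card_imset _ orbit_inj).
by apply/subset_leq_card/subsetP => _ /imsetP[m _ ->].
Qed.

End RotationFixedPartitions.

Lemma p_dvd_rstirling p N i : prime p -> p < N -> i < p -> p %| rstirling N p i.
Proof.
move=> p_prime pN ip; set s := rot_perm (prime_gt0 p_prime) (ltnW pN).
have acts : [acts <[s]>%g, on rpartitions N p i | part_act N].
  by rewrite cycle_subG !inE; apply/subsetP => P PX; rewrite inE rpartitions_act.
have := pgroup_fix_mod (rot_pgroup p_prime pN) acts; rewrite afix_cycle.
suff -> : ('Fix_(rpartitions N p i | part_act N)[s])%g = set0.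
  by rewrite cards0 mod0n => /eqP.
apply/setP => P; rewrite in_setI in_set0; apply/negbTE/andP => -[+ /afix1P sP].
rewrite inE => /and3P[pP /eqP cP /forall_inP small].
have [c0 c0E] : {c0 : 'I_N | c0 = 0 :> nat} by exists (Ordinal (leq_ltn_trans (leq0n p) pN)).
have c0P : c0 \in cover P by rewrite (cover_partition pP) inE.
have B0P := pblock_mem c0P.
have pB0 : p <= #|pblock P c0|.
  apply: rot_stable_block_large (rot_fixed_partition_blocks pP cP sP B0P) _.
  by exists c0; rewrite ?mem_pblock ?c0E ?prime_gt0.
by have := leq_trans pB0 (small _ B0P); rewrite leqNgt ip.
Qed.

Lemma logn_fact_window p n : prime p -> p <= n < p.*2 -> logn p n`! = 1.
Proof.
move=> p_prime /andP[pn np]; have p_gt1 := prime_gt1 p_prime.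
rewrite logn_fact // big_ltn ?ltnS ?(leq_trans (prime_gt0 p_prime) pn) // expn1.
rewrite big_nat big1 => [|k /andP[k_gt1 _]].
  by rewrite addn0 -(subnKC pn) -{1}(mul1n p) divnMDl ?divn_small //; lia.
rewrite divn_small // (leq_trans np) // -mul2n (leq_trans (leq_mul p_gt1 (leqnn p))) //.
by rewrite mulnn leq_pexp2l // ltnW.
Qed.

Lemma fact_window p n : prime p -> p <= n < p.*2 -> exists2 u, n`! = p * u & ~~ (p %| u).
Proof.
move=> p_prime pn; have lg := logn_fact_window p_prime pn.
have /dvdnP[u Eu] : p %| n`! by rewrite -[p]expn1 pfactor_dvdn ?fact_gt0 ?lg.
exists u; first by rewrite Eu mulnC.
apply/negP => /dvdnP[v Ev]; have : p ^ 2 %| n`! by rewrite Eu Ev -mulnA dvdn_mull.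
by rewrite pfactor_dvdn ?fact_gt0 // lg.
Qed.

Local Open Scope ring_scope.

Lemma O_p_frac p a b : ~~ (p %| b)%N -> O_p p (p%:R * a%:R / b%:R).
Proof. by move=> pNb; exists a%:Z, b%:Z; rewrite dvdzE -!pmulrn. Qed.

Lemma O_p_in_Zloc p x : O_p p x -> in_Zloc p x.
Proof. by case=> a [b [pNb ->]]; exists (p%:Z * a), b; rewrite intrM -pmulrn. Qed.

Lemma in_Zloc_subn p x n : in_Zloc p x -> in_Zloc p (x - n%:R).
Proof.
case=> a [b [pNb ->]]; exists (a - n%:Z * b), b; split => //.
have b0 : b%:~R != 0 :> rat by rewrite intr_eq0; apply: contraNneq pNb => ->; rewrite dvdz0.
by rewrite intrB intrM -pmulrn; field.
Qed.

Lemma O_p_inv_fact_pred p : prime p -> O_p p (1 + (p.-1)`!%:R^-1).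
Proof.
move=> p_prime; have p_gt1 := prime_gt1 p_prime.
have := Wilson p_gt1; rewrite p_prime => /esym pWilson.
have pNfact : ~~ (p %| (p.-1)`!)%N.
  by apply: contraTN pWilson => pfact; rewrite -addn1 dvdn_addr // dvdn1 gtn_eqF.
have [k Ek] := dvdnP pWilson.
have f0 : (p.-1)`!%:R != 0 :> rat by rewrite pnatr_eq0 -lt0n fact_gt0.
rewrite (_ : 1 + _ = p%:R * k%:R / (p.-1)`!%:R); first exact: O_p_frac.
by rewrite -natrM mulnC -Ek -addn1 natrD; field.
Qed.

Lemma sum_alt_rstirling (R : comPzRingType) i l : (0 < l)%N -> (l <= i.+1)%N ->
  \sum_(1 <= k < l.+1) (-1) ^+ k.-1 * (k.-1)`!%:R * (rstirling l k i)%:R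
  = (l == 1%N)%:R - (l == i.+1)%:R :> R.
Proof.
move=> l_gt0 li; have TN0 : [set: 'I_l] != set0 by apply/set0Pn; exists (Ordinal l_gt0).
have := sum_alt_card_kpartitions R TN0; rewrite cardsT card_ord => alt.
have [El|lNi] := eqVneq l i.+1; last first.
  have l_le_i : (l <= i)%N by rewrite -ltnS ltn_neqAle lNi.
  under eq_bigr do rewrite rstirling_unrestricted //.
  by rewrite alt subr0.
rewrite El in alt *.
have rstirlingE k :
    (rstirling i.+1 k i)%:R = #|kpartitions [set: 'I_i.+1] k|%:R - (k == 1%N)%:R :> R.
  by rewrite -rstirling_succ natrD addrK.
under eq_bigr do rewrite rstirlingE mulrBr.
rewrite sumrB alt big_ltn // big_nat big1 => [|k /andP[k_gt1 _]]; last by rewrite gtn_eqF ?mulr0.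
by rewrite addr0 !mulr1.
Qed.

Lemma O_p_G_add p i l :
  prime p -> (0 < i)%N -> (i < p - 1)%N -> (0 < l)%N -> (l <= i.+1)%N ->
  O_p p (G p i l + (l == i.+1)%:R).
Proof.
move=> p_prime i_gt0 ip l_gt0 li.
have p0 : p%:R != 0 :> rat by rewrite pnatr_eq0 -lt0n prime_gt0.
rewrite /G sum_alt_rstirling // addrAC subrK.
have [El|lN1] := eqVneq l 1%N.
  have pfact : p`! = (p * (p.-1)`!)%N.
    by rewrite -{1}(prednK (prime_gt0 p_prime)) factS prednK // prime_gt0.
  rewrite El addKn rstirling_diag // pfact natrM.
  rewrite (_ : _ + _ = 1 + (p.-1)`!%:R^-1); first exact: O_p_inv_fact_pred.
  by rewrite mulr1 (_ : 1`! = 1%N) // mulr1n mulr1 invfM mulrA divff // mul1r.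
have pN : (p < l + p - 1)%N by move: lN1 l_gt0; clear; lia.
have window : (p <= l + p - 1 < p.*2)%N by rewrite ltnW //; move: li ip; clear; lia.
have [u Eu pNu] := fact_window p_prime window.
have /dvdnP[s Es] := p_dvd_rstirling p_prime pN (leq_trans ip (leq_subr 1 p)).
have u0 : u%:R != 0 :> rat by rewrite pnatr_eq0; apply: contraNneq pNu => ->; rewrite dvdn0.
rewrite add0r Eu Es (_ : _ * _ = p%:R * (l`! * s)%:R / u%:R); first exact: O_p_frac.
by rewrite !natrM; field; rewrite u0 p0.
Qed.

Unset Implicit Arguments.

Theorem proposition3p17 (p i l : nat) :
  prime p -> odd p -> (1 <= i)%N -> (i < p - 1)%N ->
  (1 <= l)%N -> (l <= i.+1)%N ->
  in_Zloc p (G p i l) /\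
  (l = i.+1 -> O_p p (G p i l + 1)) /\
  ((l <= i)%N -> O_p p (G p i l)).
Proof.
move=> p_prime _ i_gt0 ip l_gt0 li; have Op := O_p_G_add p_prime i_gt0 ip l_gt0 li.
split; [|split].
- by rewrite -[G p i l](addrK (l == i.+1)%:R); apply/in_Zloc_subn/O_p_in_Zloc.
- by move=> El; move: Op; rewrite El eqxx.
- by move=> lei; move: Op; rewrite ltn_eqF ?ltnS // addr0.
Qed.
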